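(* $\Pi_2\text{-}\mathrm{CSP}(\mathbb{N};\leq) \subseteq \Pi_2\text{-}\mathrm{CSP}(\mathbb{Q};\leq)$.
   Context: Structures over a signature with one binary relation symbol, interpreted as the usual order $\leq$ on $\mathbb{N}$ and $\mathbb{Q}$ respectively. $\Pi_2\text{-}\mathrm{CSP}(\mathcal{A})$ is the set of sentences of the form $\forall\bar x\exists\bar y\,P$, with $P$ a conjunction of atoms (relational atoms and equalities), true in $\mathcal{A}$. *)

From HB Require Import structures.
From mathcomp Require Import all_boot all_order all_algebra.
Set Implicit Arguments. Unset Strict Implicit. Unset Printing Implicit Defensive.
Import Order.TTheory GRing.Theory Num.Theory.

(* Primitive positive Pi_2 sentences over the signature {<=}:
   forall x_0..x_{n-1}, exists y_0..y_{m-1}, conjunction of atoms. *)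
Inductive atom (n m : nat) : Type :=
  | ALe : 'I_n + 'I_m -> 'I_n + 'I_m -> atom n m
  | AEq : 'I_n + 'I_m -> 'I_n + 'I_m -> atom n m.

Record pi2_sentence : Type := Pi2 {
  nuniv : nat;
  nexist : nat;
  body : seq (atom nuniv nexist)
}.

Definition val_var (D : Type) (n m : nat) (a : 'I_n -> D) (b : 'I_m -> D)
  (v : 'I_n + 'I_m) : D :=
  match v with inl i => a i | inr j => b j end.

Definition sat_atom (D : Type) (R : D -> D -> Prop) (n m : nat)
  (a : 'I_n -> D) (b : 'I_m -> D) (t : atom n m) : Prop :=
  match t with
  | ALe u v => R (val_var a b u) (val_var a b v)
  | AEq u v => val_var a b u = val_var a b v
  end.

Definition holds_in (D : Type) (R : D -> D -> Prop) (phi : pi2_sentence) : Prop :=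
  forall a : 'I_(nuniv phi) -> D, exists b : 'I_(nexist phi) -> D,
    foldr (fun t P => sat_atom R a b t /\ P) True (body phi).

Definition Pi2CSP (D : Type) (R : D -> D -> Prop) : pi2_sentence -> Prop :=
  fun phi => holds_in R phi.

Definition leN : nat -> nat -> Prop := fun x y => (x <= y)%N.
Definition leQ : rat -> rat -> Prop := fun x y => (x <= y)%R.

From mathcomp Require Import all_boot all_order all_algebra.
Import Order.TTheory GRing.Theory Num.Theory.

(* A Pi_2 sentence transfers from (D; R) to (E; S) as soon as every tuple of
   E is the image of a tuple of D under some homomorphism D -> E: evaluate
   the universal variables at the preimage, take the existential witnesses
   in D, and push them forward.  A tuple a of rationals is the image of its
   rank tuple in N (the rank of a_i being the number of a_j below a_i) under
   the nondecreasing map k |-> max {a_j | rank a_j <= k}. *)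

Section HomTransfer.
Variables (D E : Type) (R : D -> D -> Prop) (S : E -> E -> Prop).

Lemma sat_atoms_hom (h : D -> E) n m (a : 'I_n -> D) (ha : 'I_n -> E)
    (b : 'I_m -> D) (s : seq (atom n m)) :
  (forall x y, R x y -> S (h x) (h y)) -> h \o a =1 ha ->
  foldr (fun t P => sat_atom R a b t /\ P) True s ->
  foldr (fun t P => sat_atom S ha (h \o b) t /\ P) True s.
Proof.
move=> homh def_ha; have val_h u : val_var ha (h \o b) u = h (val_var a b u).
  by case: u => //= i; rewrite -def_ha.
elim: s => [|t s IHs] //= [sat_t sat_s]; split; last exact: IHs.
by case: t sat_t => u v /=; rewrite !val_h; [apply: homh | move->].
Qed.

Lemma holds_in_hom_cover :
  (forall n (a : 'I_n -> E), exists a' : 'I_n -> D, exists h : D -> E,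
     (forall x y, R x y -> S (h x) (h y)) /\ h \o a' =1 a) ->
  forall phi, holds_in R phi -> holds_in S phi.
Proof.
move=> cover [n m s] holdsR a /=.
have [a' [h [homh ha']]] := cover n a.
have [b sat_b] := holdsR a'.
by exists (h \o b); apply: sat_atoms_hom ha' _.
Qed.

End HomTransfer.

Section RankRetraction.
Variables (disp : Order.disp_t) (T : orderType disp) (x0 : T).
Variables (n : nat) (a : 'I_n -> T).

Definition rank (i : 'I_n) : nat := #|[pred j | (a j < a i)%O]|.

Lemma leq_rank i j : (rank i <= rank j)%N = (a i <= a j)%O.
Proof.
case: (leP (a i) (a j)) => [le_ij|lt_ji].
  apply: subset_leq_card; apply/subsetP => k; rewrite !inE => lt_ki.
  exact: lt_le_trans lt_ki le_ij.
apply/negbTE; rewrite -ltnNge; apply: proper_card; apply/properP; split.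
  by apply/subsetP => k; rewrite !inE => lt_kj; apply: lt_trans lt_kj lt_ji.
by exists j; rewrite !inE ?ltxx.
Qed.

Definition rank_floor : T := \big[Order.min/x0]_j a j.

Definition unrank (k : nat) : T :=
  \big[Order.max/rank_floor]_(j | (rank j <= k)%N) a j.

Lemma unrank_nondecreasing k k' : (k <= k')%N -> (unrank k <= unrank k')%O.
Proof.
move=> le_kk'; apply: bigmax_le; first exact: bigmax_ge_id.
by move=> j le_jk; apply: le_bigmax_cond; apply: leq_trans le_jk le_kk'.
Qed.

Lemma unrankK i : unrank (rank i) = a i.
Proof.
apply: le_anti; rewrite le_bigmax_cond // andbT.
apply: bigmax_le => [|j]; first exact: bigmin_le_cond.
by rewrite leq_rank.
Qed.

End RankRetraction.

Arguments rank {disp T n} a i.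
Arguments unrank {disp T} x0 {n} a k.

Theorem mainTheorem6 :
  forall phi : pi2_sentence, Pi2CSP leN phi -> Pi2CSP leQ phi.
Proof.
apply: holds_in_hom_cover => n a.
exists (rank a), (unrank 0%R a); split.
- by move=> k k'; apply: unrank_nondecreasing.
- by move=> i /=; rewrite unrankK.
Qed.
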